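(* Let $X$ be a real topological vector space, $C\subseteq X$ convex and $x_0\in C$. Then $x_0\notin\operatorname{fri} C$ if and only if there exist $y\in C$ and a neighbourhood $V_y$ of $y$ such that for every $z\in V_y\cap C$ and every $\epsilon>0$ we have $x_0+\epsilon(x_0-z)\notin C$.
   Context: For a convex set $C$, a convex subset $F\subseteq C$ is a face of $C$ if for every $x\in F$ and all $y,z\in C$ with $x\in(y,z)=\{(1-t)y+tz:t\in(0,1)\}$ we have $y,z\in F$; $F_{\min}(x,C)$ is the intersection of all faces of $C$ containing $x\in C$. The face relative interior is $\operatorname{fri} C=\{x\in C: C\subseteq\overline{F_{\min}(x,C)}\}$. *)

From HB Require Import structures.
From mathcomp Require Import all_boot all_order all_algebra.
From mathcomp Require Import all_classical all_reals all_analysis.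
Set Implicit Arguments. Unset Strict Implicit. Unset Printing Implicit Defensive.
Import Order.TTheory GRing.Theory Num.Theory.
Local Open Scope classical_set_scope.
Local Open Scope ring_scope.

Section Faces.
Variables (R : realType) (X : lmodType R).

Definition convex (C : set X) : Prop :=
  forall x y t, C x -> C y -> 0 <= t -> t <= 1 -> C ((1 - t) *: x + t *: y).

Definition open_segment (y z : X) : set X :=
  [set x | exists t : R, 0 < t /\ t < 1 /\ x = (1 - t) *: y + t *: z].

Definition is_face (C F : set X) : Prop :=
  [/\ F `<=` C, convex F &
      forall x y z, F x -> C y -> C z -> open_segment y z x -> F y /\ F z].

Definition Fmin (x : X) (C : set X) : set X :=
  \bigcap_(F in [set F | is_face C F /\ F x]) F.
End Faces.

Definition fri (R : realType) (X : topologicalLmodType R) (C : set X) : set X :=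
  [set x | C x /\ C `<=` closure (Fmin x C)].

From HB Require Import structures.
From mathcomp Require Import all_boot all_order all_algebra.
From mathcomp Require Import all_classical all_reals all_analysis.
From mathcomp Require Import ring.
Set Implicit Arguments. Unset Strict Implicit. Unset Printing Implicit Defensive.
Import Order.TTheory GRing.Theory Num.Theory.
Local Open Scope classical_set_scope.
Local Open Scope ring_scope.

(* The minimal face of C at x0 consists exactly of the points z of C for which
   the segment from z to x0 can be prolonged a little beyond x0 inside C: this
   set is a face containing x0, and every face containing x0 contains it, since
   x0 lies in the open segment between z and a point of C beyond x0.  With this
   description, x0 fails to be in fri C precisely when some y in C has a
   neighbourhood avoiding that set, which is the stated condition. *)

Section ConvexCombinations.
Variables (R : realType) (X : lmodType R).

Lemma sub_convex_comb (x a b : X) (t : R) :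
  x - ((1 - t) *: a + t *: b) = (1 - t) *: (x - a) + t *: (x - b).
Proof. by rewrite !scalerBr addrACA -scalerDl subrK scale1r opprD. Qed.

Lemma ray_convex_comb (x a b : X) (e t : R) :
  x + e *: (x - ((1 - t) *: a + t *: b)) =
  (1 - t) *: (x + e *: (x - a)) + t *: (x + e *: (x - b)).
Proof.
rewrite (scalerDr (1 - t)) (scalerDr t) addrACA -scalerDl subrK scale1r.
rewrite sub_convex_comb scalerDr !scalerA.
by rewrite [(1 - t) * e]mulrC [t * e]mulrC -!scalerA.
Qed.

Lemma convex_comb_plane (x d1 d2 : X) (s a1 a2 b1 b2 : R) :
  (1 - s) *: (x + a1 *: d1 + a2 *: d2) + s *: (x + b1 *: d1 + b2 *: d2) =
  x + ((1 - s) * a1 + s * b1) *: d1 + ((1 - s) * a2 + s * b2) *: d2.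
Proof.
rewrite !scalerDr !scalerA addrACA [X in X + _]addrACA.
by rewrite -!scalerDl subrK scale1r.
Qed.

Lemma convex_comb_line (x d : X) (s a b : R) :
  (1 - s) *: (x + a *: d) + s *: (x + b *: d) = x + ((1 - s) * a + s * b) *: d.
Proof. by have := convex_comb_plane x d 0 s a 0 b 0; rewrite !scaler0 !addr0. Qed.

End ConvexCombinations.

Section Extendable.
Variables (R : realType) (X : lmodType R) (C : set X) (x0 : X).
Hypotheses (C_convex : convex C) (Cx0 : C x0).

Definition extendable : set X :=
  [set z | C z /\ exists2 e : R, 0 < e & C (x0 + e *: (x0 - z))].

Lemma ray_shrink z e e' : C (x0 + e *: (x0 - z)) -> 0 < e' -> e' <= e ->
  C (x0 + e' *: (x0 - z)).
Proof.
move=> Cp e'_gt0 le_e'e; have e_gt0 : 0 < e := lt_le_trans e'_gt0 le_e'e.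
have -> : x0 + e' *: (x0 - z) =
          (1 - e' / e) *: (x0 + 0 *: (x0 - z)) + (e' / e) *: (x0 + e *: (x0 - z)).
  by rewrite convex_comb_line mulr0 add0r divfK ?gt_eqF.
apply: C_convex => //; first by rewrite scale0r addr0.
  by rewrite divr_ge0 ?ltW.
by rewrite ler_pdivrMr // mul1r.
Qed.

Lemma extendable_convex : convex extendable.
Proof.
move=> a b t [Ca [ea ea_gt0 Cpa]] [Cb [eb eb_gt0 Cpb]] t_ge0 t_le1.
split; first exact: C_convex.
have min_gt0 : 0 < Num.min ea eb by rewrite lt_min ea_gt0.
exists (Num.min ea eb) => //.
rewrite ray_convex_comb; apply: C_convex => //.
  by apply: ray_shrink Cpa min_gt0 _; rewrite ge_min lexx.
by apply: ray_shrink Cpb min_gt0 _; rewrite ge_min lexx orbT.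
Qed.

Lemma extendable_segment_l x y z t : extendable x -> C y -> C z ->
  0 < t -> t < 1 -> x = (1 - t) *: y + t *: z -> extendable y.
Proof.
move=> [Cx [e e_gt0 Cp]] Cy Cz t_gt0 t_lt1 xE; split=> //.
have et_gt0 : 0 < e * t by rewrite mulr_gt0.
have det_gt0 : 0 < 1 + e * t by rewrite addr_gt0.
pose s := e * t / (1 + e * t).
exists (e * (1 - t) / (1 + e * t)); first by rewrite !mulr_gt0 ?subr_gt0 ?invr_gt0.
have p_coords : x0 + e *: (x0 - x) =
    x0 + (e * (1 - t)) *: (x0 - y) + (e * t) *: (x0 - z).
  by rewrite xE sub_convex_comb scalerDr !scalerA addrA.
have z_coords : z = x0 + 0 *: (x0 - y) + (-1) *: (x0 - z).
  by rewrite scale0r addr0 scaleN1r subKr.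
(* the prolongation of [y, x0] beyond x0 meets the segment [z, x0 + e (x0 - x)] *)
have -> : x0 + (e * (1 - t) / (1 + e * t)) *: (x0 - y) =
          (1 - s) *: (x0 + e *: (x0 - x)) + s *: z.
  rewrite p_coords [X in s *: X]z_coords convex_comb_plane.
  have -> : (1 - s) * (e * t) + s * -1 = 0 by rewrite /s; field; rewrite gt_eqF.
  by rewrite scale0r addr0 mulr0 addr0 /s; congr (_ + _ *: _); field; rewrite gt_eqF.
apply: C_convex => //; first by rewrite divr_ge0 ?ltW.
by rewrite ler_pdivrMr // mul1r lerDr.
Qed.

Lemma extendable_face : is_face C extendable.
Proof.
split; [by move=> z [] | exact: extendable_convex |].
move=> x y z Ex Cy Cz [t [t_gt0 [t_lt1 xE]]]; split.
  exact: extendable_segment_l Ex Cy Cz t_gt0 t_lt1 xE.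
apply: (@extendable_segment_l x z y (1 - t) Ex Cz Cy).
- by rewrite subr_gt0.
- by rewrite ltrBlDr ltrDl.
- by rewrite xE opprB addrCA subrr addr0 addrC.
Qed.

Lemma extendable_x0 : extendable x0.
Proof. by split=> //; exists 1; rewrite // subrr scaler0 addr0. Qed.

Lemma face_extendable_sub F : is_face C F -> F x0 -> extendable `<=` F.
Proof.
move=> [_ _ F_face] Fx0 z [Cz [e e_gt0 Cp]].
have e1_neq0 : 1 + e != 0 by rewrite gt_eqF ?addr_gt0.
suff : open_segment (x0 + e *: (x0 - z)) z x0 by case/(F_face _ _ _ Fx0 Cp Cz).
exists (e / (1 + e)); split; first by rewrite divr_gt0 ?addr_gt0.
split; first by rewrite ltr_pdivrMr ?addr_gt0 // mul1r ltrDr.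
have z_ray : z = x0 + (-1) *: (x0 - z) by rewrite scaleN1r subKr.
rewrite [X in _ = _ + _ *: X]z_ray convex_comb_line.
suff -> : (1 - e / (1 + e)) * e + e / (1 + e) * -1 = 0 by rewrite scale0r addr0.
by field.
Qed.

Lemma Fmin_extendable : Fmin x0 C = extendable.
Proof.
apply/seteqP; split.
  by move=> z Fz; apply: Fz; split; [exact: extendable_face | exact: extendable_x0].
by move=> z Ez F [F_face Fx0]; exact: face_extendable_sub Ez.
Qed.

End Extendable.

Theorem theorem4p7 (R : realType) (X : topologicalLmodType R) (C : set X)
    (x0 : X) :
  convex C -> C x0 ->
  (~ fri C x0 <->
   exists y : X, C y /\
     exists V : set X, nbhs y V /\
       forall z : X, V z -> C z ->
         forall eps : R, 0 < eps -> ~ C (x0 + eps *: (x0 - z))).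
Proof.
move=> C_convex Cx0; rewrite /fri /= Fmin_extendable //; split.
- move=> nfri; have : ~ (C `<=` closure (extendable C x0)) by move=> ?; apply: nfri.
  move=> /existsNP [y /not_implyP [Cy /existsNP [V /not_implyP [Vy noE]]]].
  exists y; split=> //; exists V; split=> // z Vz Cz e e_gt0 Cp.
  by apply: noE; exists z; split=> //; split=> //; exists e.
- move=> [y [Cy [V [Vy noext]]]] [_ /(_ y Cy V Vy) [z [[Cz [e e_gt0 Cp]] Vz]]].
  exact: noext z Vz Cz e e_gt0 Cp.
Qed.
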